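(* Let $\Sigma$ be a finite signature. The axiomatization ${\rm AX}$ is sound and complete for the logic $\mathcal{L}^{\rm KD}(\Sigma)$ with respect to the class $\mathcal{M}(\Sigma)$; that is, a formula of $\mathcal{L}^{\rm KD}(\Sigma)$ is provable in ${\rm AX}$ if and only if it is valid in $\mathcal{M}(\Sigma)$.
   Context: Terms and deductive systems. A signature $\Sigma$ is a finite set of operation symbols with arities (arity-0 symbols are constants). Given a countable set of variables, the term algebra $T_\Sigma$ is the least set containing the variables and closed under applying operation symbols; ground terms are terms without variables, and $T^g_\Sigma$ is the set of ground terms. A ground substitution $\rho$ maps variables to ground terms; $\rho(t)$ replaces each variable of $t$ by its image. A $\Sigma'$-deductive system $D$ is a subset of $\wp_{fin}(T_{\Sigma'})\times T_{\Sigma'}$; an element $(\{t_1,\dots,t_n\},t)$ is a deduction rule, written $t_1,\dots,t_n\triangleright t$. A deduction of $t$ from a set $\Gamma$ of terms is a sequence of ground terms $u_1,\dots,u_m$ with $u_m=t$ such that each $u_i$ is either $\rho(t')$ for some ground substitution $\rho$ and some $t'\in\Gamma$, or $\rho(t')$ for some ground substitution $\rho$ and some rule $t'_1,\dots,t'_k\triangleright t'$ of $D$ such that each $\rho(t'_j)$ equals some $u_{l}$ with $l<i$. Write $\Gamma\vdash_D t$ if such a deduction exists. Let $\Sigma^{\rm KD}=\{\mathsf{ob},\mathsf{true},\mathsf{false},\mathsf{not},\mathsf{and},\mathsf{know},\mathsf{xknow}\}$, with $\mathsf{true},\mathsf{false}$ of arity 0, $\mathsf{ob},\mathsf{not},\mathsf{know},\mathsf{xknow}$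 of arity 1, $\mathsf{and}$ of arity 2. Logic. The primitive propositions of $\mathcal{L}^{\rm KD}(\Sigma)$ are the ground terms $p\in T^g_\Sigma$. Formulas are built from primitive propositions by $\neg$, $\wedge$, the unary modal operators $K$ (implicit knowledge) and $X$ (explicit/deductive algorithmic knowledge), and formulas $\mathit{Ob}(p)$ for primitive propositions $p$. $\phi\vee\psi$, $\phi\Rightarrow\psi$, $\mathit{true}$, $\mathit{false}$ are the usual abbreviations. Each formula $\phi$ is translated to a term $\phi^T$: $p^T=p$, $(\neg\phi)^T=\mathsf{not}(\phi^T)$, $(\phi\wedge\psi)^T=\mathsf{and}(\phi^T,\psi^T)$, $(K\phi)^T=\mathsf{know}(\phi^T)$, $(X\phi)^T=\mathsf{xknow}(\phi^T)$, $(\mathit{Ob}(p))^T=\mathsf{ob}(p)$. Structures. A deductive algorithmic knowledge structure is $M=(S,\pi,D)$ where $S$ is a set of states, each of the form $(e,O)$ with $O$ a finite set of primitive propositions (the observations), $\pi$ assigns to each state $s$ and primitive proposition $p$ a truth value $\pi(s)(p)\in\{\textbf{true},\textbf{false}\}$, and $D$ is a $\Sigma\cup\Sigma^{\rm KD}$-deductive system. Let $s\sim s'$ iff $s=(e,O)$ and $s'=(e',O)$ for the same $O$. Satisfaction: $(M,s)\models p$ iff $\pi(s)(p)=\textbf{true}$; negation and conjunction as usual; $(M,s)\models K\phi$ iff $(M,s')\models\phi$ for all $s'\sim s$; $(M,s)\models X\phi$ iff $s=(e,O)$ and $\{\mathsf{ob}(p)\mid p\in O\}\vdash_D\phi^T$;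 $(M,s)\models\mathit{Ob}(p)$ iff $s=(e,O)$ and $p\in O$. $\mathcal{M}(\Sigma)$ is the class of all such structures (with any $\Sigma\cup\Sigma^{\rm KD}$-deductive system). A formula is valid in a class if true at every state of every structure in the class. Axiomatization ${\rm AX}$: Taut (all instances of propositional tautologies); MP (from $\phi$ and $\phi\Rightarrow\psi$ infer $\psi$); K1 $(K\phi\wedge K(\phi\Rightarrow\psi))\Rightarrow K\psi$; K2 from $\phi$ infer $K\phi$; K3 $K\phi\Rightarrow\phi$; K4 $K\phi\Rightarrow KK\phi$; K5 $\neg K\phi\Rightarrow K\neg K\phi$; X1 $X\phi\Rightarrow KX\phi$; X2 $\mathit{Ob}(p)\Rightarrow X\mathit{Ob}(p)$; X3 $\mathit{Ob}(p)\Rightarrow K\mathit{Ob}(p)$. Sound w.r.t. a class: every provable formula is valid in it; complete: every valid formula is provable. *)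

From mathcomp Require Import all_boot.
Set Implicit Arguments.
Unset Strict Implicit.
Unset Printing Implicit Defensive.

Inductive term (S : Type) : Type :=
| Var of nat
| App of S & seq (term S).
Arguments Var {S} _.

Section Terms.
Variables (S : Type) (ar : S -> nat).

Fixpoint wfb (t : term S) : bool :=
  match t with
  | Var _ => true
  | App f ts => (size ts == ar f) && all wfb ts
  end.

Fixpoint groundb (t : term S) : bool :=
  match t with
  | Var _ => false
  | App _ ts => all groundb ts
  end.

Fixpoint subst (rho : nat -> term S) (t : term S) : term S :=
  match t with
  | Var x => rho x
  | App f ts => App f (map (subst rho) ts)
  end.

Definition ground_subst (rho : nat -> term S) : Prop :=
  forall x, groundb (rho x) && wfb (rho x).

Definition gterm := {t : term S | groundb t && wfb t}.
End Terms.

Fixpoint inlist (T : Type) (x : T) (s : seq T) : Prop :=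
  match s with
  | [::] => False
  | y :: s' => x = y \/ inlist x s'
  end.

(* A deductive system: a set of rules (premises, conclusion); the finite set
   of premises is given as a list. *)
Definition deductive_system (S : Type) := seq (term S) -> term S -> Prop.

Section Deduction.
Variables (S : Type) (ar : S -> nat) (D : deductive_system S).

Definition is_deduction (Gamma : seq (term S)) (us : seq (term S)) : Prop :=
  forall i, i < size us ->
    exists rho, ground_subst ar rho /\
      ((exists t', inlist t' Gamma /\ nth (Var 0) us i = subst rho t') \/
       (exists prem c, D prem c /\ nth (Var 0) us i = subst rho c /\
          forall tj, inlist tj prem ->
            exists l, l < i /\ nth (Var 0) us l = subst rho tj)).

Definition deducible (Gamma : seq (term S)) (t : term S) : Prop :=
  exists us, is_deduction Gamma (rcons us t).
End Deduction.

Inductive KDsym := KOb | KTrue | KFalse | KNot | KAnd | KKnow | KXknow.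

Definition kd_ar (k : KDsym) : nat :=
  match k with
  | KTrue | KFalse => 0
  | KOb | KNot | KKnow | KXknow => 1
  | KAnd => 2
  end.

Definition sym_ext (F : Type) := (F + KDsym)%type.
Definition ar_ext (F : Type) (ar : F -> nat) (f : sym_ext F) : nat :=
  match f with inl g => ar g | inr k => kd_ar k end.

Fixpoint emb (F : Type) (t : term F) : term (sym_ext F) :=
  match t with
  | Var x => Var x
  | App f ts => App (inl f) (map (@emb F) ts)
  end.

Section Logic.
Variables (F : Type) (ar : F -> nat).

Notation prim := (gterm ar).

Inductive form : Type :=
| Prim of prim
| Neg of form
| And of form & form
| Kn of form
| Xn of form
| Ob of prim.

Definition Or (a b : form) := Neg (And (Neg a) (Neg b)).
Definition Imp (a b : form) := Neg (And a (Neg b)).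

Fixpoint trans (phi : form) : term (sym_ext F) :=
  match phi with
  | Prim p => emb (val p)
  | Neg a => App (inr KNot) [:: trans a]
  | And a b => App (inr KAnd) [:: trans a; trans b]
  | Kn a => App (inr KKnow) [:: trans a]
  | Xn a => App (inr KXknow) [:: trans a]
  | Ob p => App (inr KOb) [:: emb (val p)]
  end.

(* States are pairs (e, O) with e in an arbitrary environment type and O a
   finite set of primitive propositions (given as a list). *)
Record kd_structure : Type := KDStructure {
  env : Type;
  states : (env * seq prim)%type -> Prop;
  pi : (env * seq prim)%type -> prim -> bool;
  D : deductive_system (sym_ext F);
  D_wf : forall prem c, D prem c ->
           all (wfb (ar_ext ar)) prem && wfb (ar_ext ar) c
}.
Arguments states : clear implicits.
Arguments pi : clear implicits.
Arguments D : clear implicits.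

Definition same_obs (O O' : seq prim) : Prop :=
  forall p, inlist p O <-> inlist p O'.

Local Unset Implicit Arguments.
Fixpoint sat (M : kd_structure) (s : (env M * seq prim)%type) (phi : form)
  : Prop :=
  match phi with
  | Prim p => pi M s p = true
  | Neg a => ~ sat M s a
  | And a b => sat M s a /\ sat M s b
  | Kn a => forall s', states M s' -> same_obs s.2 s'.2 -> sat M s' a
  | Xn a => deducible (ar_ext ar) (D M)
              [seq App (inr KOb) [:: emb (val p)] | p <- s.2] (trans a)
  | Ob p => inlist p s.2
  end.

Local Set Implicit Arguments.
Definition valid (phi : form) : Prop :=
  forall (M : kd_structure) s, states M s -> sat M s phi.

Inductive pform : Type :=
| PVar of nat
| PNeg of pform
| PAnd of pform & pform.

Fixpoint peval (v : nat -> bool) (q : pform) : bool :=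
  match q with
  | PVar n => v n
  | PNeg a => ~~ peval v a
  | PAnd a b => peval v a && peval v b
  end.

Definition tautology (q : pform) : Prop := forall v, peval v q = true.

Fixpoint pinst (sigma : nat -> form) (q : pform) : form :=
  match q with
  | PVar n => sigma n
  | PNeg a => Neg (pinst sigma a)
  | PAnd a b => And (pinst sigma a) (pinst sigma b)
  end.

Inductive provable : form -> Prop :=
| AX_Taut q sigma : tautology q -> provable (pinst sigma q)
| AX_MP phi psi : provable phi -> provable (Imp phi psi) -> provable psi
| AX_K1 phi psi : provable (Imp (And (Kn phi) (Kn (Imp phi psi))) (Kn psi))
| AX_K2 phi : provable phi -> provable (Kn phi)
| AX_K3 phi : provable (Imp (Kn phi) phi)
| AX_K4 phi : provable (Imp (Kn phi) (Kn (Kn phi)))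
| AX_K5 phi : provable (Imp (Neg (Kn phi)) (Kn (Neg (Kn phi))))
| AX_X1 phi : provable (Imp (Xn phi) (Kn (Xn phi)))
| AX_X2 p : provable (Imp (Ob p) (Xn (Ob p)))
| AX_X3 p : provable (Imp (Ob p) (Kn (Ob p))).
End Logic.

From mathcomp Require Import all_boot.
From mathcomp Require Import boolp classical_sets.

Set Implicit Arguments.
Unset Strict Implicit.
Unset Printing Implicit Defensive.

Local Open Scope classical_set_scope.

(* Soundness is a routine induction on derivations: the truth of X phi at a
   state (e, O) depends on O only, which gives X1, and Ob(p)^T is itself a
   hypothesis of the deduction, which gives X2.

   Completeness goes through a canonical model.  If phi is not provable,
   {not phi} extends to a maximal consistent set G0.  The states are the
   maximal consistent sets H containing {x | K x in G0}, all carrying the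
   same observations O0 = {p | Ob p in G0}, cut down to the Ob-atoms of phi
   because observation sets must be finite; X is interpreted by the
   premise-free rules x^T for X x in G0.  So K ranges over all states, and
   the formulas b with b -> K b provable (K x by K4, X x by X1, Ob p by X3,
   and their negations by K5) have the same truth value in H as in G0;
   this is what makes the K, X and Ob cases of the truth lemma work. *)

Section Inlist.
Variable T : Type.

Lemma inlist_map (U : Type) (f : U -> T) (s : seq U) t :
  inlist t (map f s) <-> exists2 u, inlist u s & t = f u.
Proof.
elim: s => [|u s IH] /=; first by split=> // [[]].
split=> [[->|/IH [v sv ->]]|[v [->|sv] tv]].
- by exists u; first left.
- by exists v; first right.
- by left.
- by right; apply/IH; exists v.
Qed.

Lemma inlist_cat x (s1 s2 : seq T) :
  inlist x (s1 ++ s2) <-> inlist x s1 \/ inlist x s2.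
Proof. by elim: s1 => [|y s1 IH] /=; [tauto|rewrite IH; tauto]. Qed.

Lemma inlist_filter (p : pred T) x s : inlist x (filter p s) <-> inlist x s /\ p x.
Proof.
elim: s => [|y s IH] /=; first by tauto.
case: ifP => py /=; rewrite IH.
- by split=> [[->|[]]|[[->|]]]; auto.
- by split=> [[]|[[->|]]]; rewrite ?py; auto.
Qed.

Lemma all_inlistP (p : pred T) s : all p s <-> (forall t, inlist t s -> p t).
Proof.
elim: s => [|t s IH] //=.
split=> [/andP [pt /IH ps] u [->|] //|ts]; first exact: ps.
rewrite ts /=; last by left.
by apply/IH => u su; apply: ts; right.
Qed.

Lemma map_id_inlist (f : T -> T) s : (forall t, inlist t s -> f t = t) -> map f s = s.
Proof.
elim: s => [|t s IH] //= fs; rewrite fs; last by left.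
by rewrite IH // => u su; apply: fs; right.
Qed.

End Inlist.

Section TermInduction.
Variables (S : Type) (P : term S -> Prop).
Hypothesis P_var : forall n, P (Var n).
Hypothesis P_app : forall f ts, (forall t, inlist t ts -> P t) -> P (App f ts).

Fixpoint term_nested_ind (t : term S) : P t :=
  match t with
  | Var n => P_var n
  | App f ts => P_app f
      ((fix args (l : seq (term S)) : forall u, inlist u l -> P u :=
          match l with
          | [::] => fun u u_nil => False_ind _ u_nil
          | t0 :: l' => fun u ul =>
              match ul with
              | or_introl E => eq_ind_r P (term_nested_ind t0) E
              | or_intror ul' => args l' u ul'
              end
          end) ts)
  end.

End TermInduction.

Lemma subst_ground (S : Type) (rho : nat -> term S) t : groundb t -> subst rho t = t.
Proof.
elim/term_nested_ind: t => [//|f ts IH] /= /all_inlistP ts_ground.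
by rewrite map_id_inlist // => u tu; apply/IH/ts_ground.
Qed.

Section Embedding.
Variables (F : Type) (ar : F -> nat).

Lemma emb_ground (t : term F) : groundb t -> groundb (emb t).
Proof.
elim/term_nested_ind: t => [//|f ts IH] /= /all_inlistP ts_ground.
by apply/all_inlistP => _ /inlist_map [u tu ->]; apply/IH/ts_ground.
Qed.

Lemma emb_wf (t : term F) : wfb ar t -> wfb (ar_ext ar) (emb t).
Proof.
elim/term_nested_ind: t => [//|f ts IH] /= /andP [/eqP <- /all_inlistP ts_wf].
rewrite size_map eqxx; apply/all_inlistP => _ /inlist_map [u tu ->].
exact/IH/ts_wf.
Qed.

Fixpoint unemb (t : term (sym_ext F)) : term F :=
  match t with
  | Var x => Var x
  | App (inl f) ts => App f (map unemb ts)
  | App (inr _) _ => Var 0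
  end.

Lemma embK : cancel (@emb F) unemb.
Proof.
by elim/term_nested_ind => [//|f ts IH] /=; rewrite -map_comp map_id_inlist.
Qed.

Lemma emb_inj : injective (@emb F).
Proof. exact: can_inj embK. Qed.

End Embedding.

Section Deductions.
Variables (S : Type) (ar : S -> nat) (D : deductive_system S).
Implicit Types (G : seq (term S)) (t : term S).

Lemma deducible_last_step G t : deducible ar D G t ->
  (exists t' rho, inlist t' G /\ t = subst rho t') \/
  (exists prem c rho, D prem c /\ t = subst rho c).
Proof.
case=> us /(_ (size us)); rewrite size_rcons nth_rcons ltnn eqxx.
case=> // rho [_ [[t' [Gt' ->]]|[prem [c [Dc [-> _]]]]]].
- by left; exists t', rho.
- by right; exists prem, c, rho.
Qed.

Lemma deducible_one_step G t rho : ground_subst ar rho ->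
  (exists2 t', inlist t' G & t = subst rho t') \/
  (exists2 c, D [::] c & t = subst rho c) -> deducible ar D G t.
Proof.
move=> rho_ground t_step; exists [::] => -[|//] _; exists rho; split=> //.
case: t_step => [[t' Gt' ->]|[c Dc ->]]; first by left; exists t'.
by right; exists [::], c.
Qed.

Lemma deducible_sub_hyps G1 G2 t : (forall u, inlist u G1 -> inlist u G2) ->
  deducible ar D G1 t -> deducible ar D G2 t.
Proof.
move=> G12 [us ded]; exists us => i /ded [rho [rho_ground [[t' [Gt' E]]|rule]]].
- by exists rho; split=> //; left; exists t'; split=> //; apply: G12.
- by exists rho; split=> //; right.
Qed.

End Deductions.

Section Translation.
Variables (F : Type) (ar : F -> nat).
Notation form := (form ar).
Notation prim := (gterm ar).

Definition rho_true : nat -> term (sym_ext F) := fun=> App (inr KTrue) [::].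

Lemma rho_true_ground : ground_subst (ar_ext ar) rho_true.
Proof. by []. Qed.

Lemma prim_ground (p : prim) : groundb (emb (val p)).
Proof. by case: p => t /= /andP [/emb_ground]. Qed.

Lemma prim_wf (p : prim) : wfb (ar_ext ar) (emb (val p)).
Proof. by case: p => t /= /andP [_ /emb_wf]. Qed.

Lemma trans_ground (a : form) : groundb (trans a).
Proof. by elim: a => //= [p|a ->|a -> b ->|a ->|a ->|p]; rewrite ?prim_ground. Qed.

Lemma trans_wf (a : form) : wfb (ar_ext ar) (trans a).
Proof. by elim: a => //= [p|a ->|a -> b ->|a ->|a ->|p]; rewrite ?prim_wf. Qed.

Lemma prim_inj : injective (fun p : prim => emb (val p)).
Proof. by move=> p q /emb_inj /val_inj. Qed.

Lemma emb_prim_neq_kd (p : prim) k ts : emb (val p) <> App (inr k) ts.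
Proof. by case: p => -[]. Qed.

Lemma trans_inj : injective (@trans F ar).
Proof.
elim=> [p|a IH|a IHa b IHb|a IH|a IH|p] [q|a'|a' b'|a'|a'|q] //= E;
  try by [case: (emb_prim_neq_kd E)|case: (emb_prim_neq_kd (esym E))].
- by rewrite (prim_inj E).
- by case: E => /IH ->.
- by case: E => /IHa -> /IHb ->.
- by case: E => /IH ->.
- by case: E => /IH ->.
- by case: E => /prim_inj ->.
Qed.

End Translation.

Section Satisfaction.
Variables (F : Type) (ar : F -> nat) (M : kd_structure ar).
Notation form := (form ar).
Notation prim := (gterm ar).
Implicit Types (a b : form) (O : seq prim).

Lemma sat_imp s a b : sat F ar M s (Imp a b) <-> (sat F ar M s a -> sat F ar M s b).
Proof. by split=> [ab sa|ab [/ab]//]; apply: contrapT => nb; apply: ab. Qed.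

Lemma sat_pinst s sigma q :
  sat F ar M s (pinst sigma q) <-> peval (fun n => `[< sat F ar M s (sigma n) >]) q.
Proof.
elim: q => [n|q IH|q1 IH1 q2 IH2] /=.
- by split=> /asboolP.
- by rewrite IH; apply: rwP negP.
- by rewrite IH1 IH2; apply: rwP andP.
Qed.

Lemma same_obs_sym O O' : same_obs O O' -> same_obs O' O.
Proof. by move=> OO' p; rewrite OO'. Qed.

Lemma same_obs_trans O O' O'' : same_obs O O' -> same_obs O' O'' -> same_obs O O''.
Proof. by move=> OO' O'O'' p; rewrite OO'. Qed.

Lemma deducible_same_obs O O' a : same_obs O O' ->
  deducible (ar_ext ar) (D M) [seq trans (Ob p) | p <- O] (trans a) ->
  deducible (ar_ext ar) (D M) [seq trans (Ob p) | p <- O'] (trans a).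
Proof.
move=> OO'; apply: deducible_sub_hyps => _ /inlist_map [p Op ->].
by apply/inlist_map; exists p => //; apply/OO'.
Qed.

End Satisfaction.

Lemma soundness (F : Type) (ar : F -> nat) (phi : form ar) : provable phi -> valid phi.
Proof.
elim=> {phi} [q sigma q_taut|a b _ va _ vab|a b|a _ va|a|a|a|a|p|p] M s Ms.
- exact/sat_pinst/q_taut.
- by move: (vab M s Ms) => /sat_imp; apply; apply: va.
- apply/sat_imp => -[Ka Kab] s' Ms' ss'.
  by move: (Kab s' Ms' ss') => /sat_imp; apply; apply: Ka.
- by move=> s' Ms' _; apply: va.
- by apply/sat_imp; apply.
- apply/sat_imp => Ka s' Ms' ss' s'' Ms'' s's''.
  by apply: Ka => //; apply: same_obs_trans ss' s's''.
- apply/sat_imp => nKa s' Ms' ss' Ka'; apply: nKa => s'' Ms'' ss''.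
  by apply: Ka' => //; apply: same_obs_trans (same_obs_sym ss') ss''.
- by apply/sat_imp => Xa s' Ms' ss'; apply: deducible_same_obs ss' Xa.
- apply/sat_imp => Op; apply: (deducible_one_step (rho_true_ground ar)); left.
  exists (trans (Ob p)); first by apply/inlist_map; exists p.
  by rewrite subst_ground ?trans_ground.
- by apply/sat_imp => Op s' _ ss'; apply/ss'.
Qed.

Section Hilbert.
Variables (F : Type) (ar : F -> nat).
Notation form := (form ar).
Notation provable := (@provable F ar).
Implicit Types a b c : form.

Definition PImp (x y : pform) := PNeg (PAnd x (PNeg y)).

Lemma provable_taut q a (l : seq form) :
  tautology q -> provable (pinst (nth a (a :: l)) q).
Proof. exact: AX_Taut. Qed.

Local Ltac taut q a l :=
  let v := fresh "v" in
  apply: (@provable_taut q a l) => v /=;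
  by case: (v 0); case: (v 1); case: (v 2).

Local Notation P0 := (PVar 0).
Local Notation P1 := (PVar 1).
Local Notation P2 := (PVar 2).

Lemma taut_K a b : provable (Imp a (Imp b a)).
Proof. taut (PImp P0 (PImp P1 P0)) a [:: b]. Qed.

Lemma taut_S a b c :
  provable (Imp (Imp a (Imp b c)) (Imp (Imp a b) (Imp a c))).
Proof.
taut (PImp (PImp P0 (PImp P1 P2)) (PImp (PImp P0 P1) (PImp P0 P2))) a [:: b; c].
Qed.

Lemma imp_refl a : provable (Imp a a).
Proof. taut (PImp P0 P0) a (Nil form). Qed.

Lemma taut_and_intro a b : provable (Imp a (Imp b (And a b))).
Proof. taut (PImp P0 (PImp P1 (PAnd P0 P1))) a [:: b]. Qed.

Lemma taut_and_fst a b : provable (Imp (And a b) a).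
Proof. taut (PImp (PAnd P0 P1) P0) a [:: b]. Qed.

Lemma taut_and_snd a b : provable (Imp (And a b) b).
Proof. taut (PImp (PAnd P0 P1) P1) a [:: b]. Qed.

Lemma taut_neg_intro a b : provable (Imp (Imp a b) (Imp (Imp a (Neg b)) (Neg a))).
Proof. taut (PImp (PImp P0 P1) (PImp (PImp P0 (PNeg P1)) (PNeg P0))) a [:: b]. Qed.

Lemma taut_by_contra a b :
  provable (Imp (Imp (Neg a) b) (Imp (Imp (Neg a) (Neg b)) a)).
Proof.
taut (PImp (PImp (PNeg P0) P1) (PImp (PImp (PNeg P0) (PNeg P1)) P0)) a [:: b].
Qed.

Lemma taut_contra a b : provable (Imp (Imp a b) (Imp (Neg b) (Neg a))).
Proof. taut (PImp (PImp P0 P1) (PImp (PNeg P1) (PNeg P0))) a [:: b]. Qed.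

Lemma taut_imp_trans a b c : provable (Imp (Imp a b) (Imp (Imp b c) (Imp a c))).
Proof.
taut (PImp (PImp P0 P1) (PImp (PImp P1 P2) (PImp P0 P2))) a [:: b; c].
Qed.

Lemma taut_and_imp_swap a b c : provable (Imp (Imp (And a b) c) (Imp b (Imp a c))).
Proof. taut (PImp (PImp (PAnd P0 P1) P2) (PImp P1 (PImp P0 P2))) a [:: b; c]. Qed.

Lemma imp_trans a b c :
  provable (Imp a b) -> provable (Imp b c) -> provable (Imp a c).
Proof. by move=> ab bc; apply: AX_MP bc (AX_MP ab (taut_imp_trans a b c)). Qed.

Lemma contra_provable a b : provable (Imp a b) -> provable (Imp (Neg b) (Neg a)).
Proof. by move=> ab; apply: AX_MP ab (taut_contra a b). Qed.

Lemma K_mono a b : provable (Imp a b) -> provable (Imp (Kn a) (Kn b)).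
Proof.
move=> ab; apply: AX_MP (AX_K2 ab) _.
exact: AX_MP (AX_K1 a b) (taut_and_imp_swap _ _ _).
Qed.

Definition K_stable b := provable (Imp b (Kn b)).

(* By K3, K5 and monotonicity: not b -> not K b -> K (not K b) -> K (not b). *)
Lemma K_stable_neg b : K_stable b -> K_stable (Neg b).
Proof.
move=> b_stable; apply: imp_trans (contra_provable (AX_K3 b)) _.
exact: imp_trans (AX_K5 b) (K_mono (contra_provable b_stable)).
Qed.

End Hilbert.

Section Derivability.
Variables (F : Type) (ar : F -> nat).
Notation form := (form ar).
Notation provable := (@provable F ar).
Implicit Types (a b c : form) (G H : set form).

Inductive derivable G : form -> Prop :=
| der_hyp a : G a -> derivable G a
| der_thm a : provable a -> derivable G a
| der_mp a b : derivable G a -> derivable G (Imp a b) -> derivable G b.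

Lemma derivable_sub G H a : G `<=` H -> derivable G a -> derivable H a.
Proof.
move=> GH; elim=> [x /GH|x|x y _ IHx _ IHxy]; [exact: der_hyp|exact: der_thm|].
exact: der_mp IHx IHxy.
Qed.

Lemma derivable_mp2 G a b c :
  provable (Imp a (Imp b c)) -> derivable G a -> derivable G b -> derivable G c.
Proof.
by move=> abc da db; apply: der_mp db _; apply: der_mp da (der_thm _ abc).
Qed.

Lemma deduction G a b : derivable (G `|` [set a]) b -> derivable G (Imp a b).
Proof.
elim=> [x [Gx|->]|x px|x y _ IHx _ IHxy].
- exact: der_mp (der_hyp Gx) (der_thm _ (taut_K _ _)).
- exact/der_thm/imp_refl.
- exact: der_mp (der_thm _ px) (der_thm _ (taut_K _ _)).
- exact: derivable_mp2 (taut_S _ _ _) IHxy IHx.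
Qed.

Lemma derivable0 a : derivable set0 a -> provable a.
Proof. by elim=> // x y _ px _ pxy; apply: AX_MP px pxy. Qed.

Lemma derivable_K G b : derivable [set x | G (Kn x)] b -> derivable G (Kn b).
Proof.
elim=> [x Gx|x px|x y _ IHx _ IHxy]; [exact: der_hyp|exact/der_thm/AX_K2|].
apply: der_mp (der_thm _ (AX_K1 x y)).
exact: derivable_mp2 (taut_and_intro _ _) IHx IHxy.
Qed.

Definition consistent G := forall b, derivable G b -> ~ derivable G (Neg b).

Definition maximal G := consistent G /\ forall c, consistent (G `|` [set c]) -> G c.

Lemma consistent_sub G H : G `<=` H -> consistent H -> consistent G.
Proof.
by move=> GH H_con b /(derivable_sub GH) + /(derivable_sub GH); apply: H_con.
Qed.

Lemma inconsistent_add G a : ~ consistent (G `|` [set a]) -> derivable G (Neg a).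
Proof.
move=> Ga_incon; apply: contrapT => Ga_noneg; apply: Ga_incon => b db dnb.
exact/Ga_noneg/(derivable_mp2 (taut_neg_intro _ _) (deduction db) (deduction dnb)).
Qed.

Lemma inconsistent_add_neg G a : ~ consistent (G `|` [set Neg a]) -> derivable G a.
Proof.
move=> Ga_incon; apply: contrapT => Ga_no; apply: Ga_incon => b db dnb.
exact/Ga_no/(derivable_mp2 (taut_by_contra _ _) (deduction db) (deduction dnb)).
Qed.

Section Maximal.
Variable G : set form.
Hypothesis G_max : maximal G.

Lemma maximal_derivable c : derivable G c -> G c.
Proof.
move=> dc; apply: G_max.2 => b db dnb.
exact: G_max.1 (der_mp dc (deduction db)) (der_mp dc (deduction dnb)).
Qed.

Lemma maximal_provable c : provable c -> G c.
Proof. by move=> pc; apply/maximal_derivable/der_thm. Qed.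

Lemma maximal_mp a b : G (Imp a b) -> G a -> G b.
Proof.
by move=> Gab Ga; apply/maximal_derivable/(der_mp (der_hyp Ga) (der_hyp Gab)).
Qed.

Lemma maximal_neg a : G (Neg a) <-> ~ G a.
Proof.
split=> [Gna Ga|nGa]; first exact: G_max.1 (der_hyp Ga) (der_hyp Gna).
by apply/maximal_derivable/inconsistent_add => /G_max.2.
Qed.

Lemma maximal_and a b : G (And a b) <-> G a /\ G b.
Proof.
split=> [Gab|[Ga Gb]].
- by split; apply: maximal_mp Gab; apply: maximal_provable;
    [apply: taut_and_fst|apply: taut_and_snd].
- apply: maximal_derivable.
  exact: derivable_mp2 (taut_and_intro _ _) (der_hyp Ga) (der_hyp Gb).
Qed.

End Maximal.

End Derivability.

Section Lindenbaum.
Variables (F : Type) (ar : F -> nat).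
Notation form := (form ar).
Implicit Types (G : set form) (Fm : set (set form)).

Lemma chain_upper T (Fm : set (set T)) X Y : total_on Fm subset ->
  Fm X -> Fm Y -> exists2 Z, Fm Z & X `<=` Z /\ Y `<=` Z.
Proof.
move=> Fm_chain FmX FmY; case: (Fm_chain X Y FmX FmY) => [XY|YX].
- by exists Y => //; split=> [|t].
- by exists X => //; split=> [t|].
Qed.

Lemma derivable_chain G Fm X0 b : total_on Fm subset -> Fm X0 ->
  derivable (G `|` \bigcup_(X in Fm) X) b -> exists2 X, Fm X & derivable (G `|` X) b.
Proof.
move=> Fm_chain FmX0; elim=> [x [Gx|[X FmX Xx]]|x px|x y _ [X FmX dx] _ [Y FmY dxy]].
- by exists X0 => //; apply: der_hyp; left.
- by exists X => //; apply: der_hyp; right.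
- by exists X0 => //; apply: der_thm.
- have [Z FmZ [XZ YZ]] := chain_upper Fm_chain FmX FmY.
  exists Z => //; apply: der_mp (derivable_sub _ dx) (derivable_sub _ dxy).
  + exact: setUS XZ.
  + exact: setUS YZ.
Qed.

Lemma lindenbaum G : consistent G -> exists2 H, maximal H & G `<=` H.
Proof.
move=> G_con.
have [A [GA_con A_max]] : exists A, consistent (G `|` A) /\
    forall B, A `<` B -> ~ consistent (G `|` B).
  apply: Zorn_bigcup => Fm Fm_con Fm_chain.
  have [[X0 FmX0]|Fm0] := pselect (exists X0, Fm X0); last first.
    by apply: consistent_sub G_con => x [//|[X FmX]]; case: Fm0; exists X.
  move=> b /(derivable_chain Fm_chain FmX0) [X FmX dbX].
  move=> /(derivable_chain Fm_chain FmX0) [Y FmY dnbY].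
  have [Z FmZ [XZ YZ]] := chain_upper Fm_chain FmX FmY.
  apply: (Fm_con Z FmZ b); apply: derivable_sub; [|exact: dbX| |exact: dnbY].
  + exact: setUS XZ.
  + exact: setUS YZ.
exists (G `|` A) => //; split=> // c GAc_con; right.
apply: contrapT => nAc; apply: (A_max (A `|` [set c])); last by rewrite setUA.
by split=> [|/(_ c (or_intror erefl))//]; apply: subsetUl.
Qed.

End Lindenbaum.

Section Accessibility.
Variables (F : Type) (ar : F -> nat).
Notation form := (form ar).
Implicit Types (G H : set form).

Definition accessible G H := forall x, G (Kn x) -> H x.

Lemma maximal_accessible_refl G : maximal G -> accessible G G.
Proof.
by move=> G_max x; apply: (maximal_mp G_max); apply: maximal_provable (AX_K3 x).
Qed.

Lemma accessible_witness G a : maximal G -> ~ G (Kn a) ->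
  exists2 H, maximal H & accessible G H /\ H (Neg a).
Proof.
move=> G_max nGKa.
have [|H H_max GaH] := @lindenbaum _ _ ([set x | G (Kn x)] `|` [set Neg a]).
  by apply: contrapT => /inconsistent_add_neg /derivable_K /(maximal_derivable G_max).
by exists H => //; split=> [x GKx|]; apply: GaH; [left|right].
Qed.

Lemma maximal_K_stable G H b : K_stable b -> maximal G -> maximal H ->
  accessible G H -> G b <-> H b.
Proof.
move=> b_stable G_max H_max GH; split=> [Gb|Hb].
  exact/GH/(maximal_mp G_max (maximal_provable G_max b_stable)).
apply: contrapT => /(maximal_neg G_max).
move=> /(maximal_mp G_max (maximal_provable G_max (K_stable_neg b_stable))).
by move=> /GH /(maximal_neg H_max).
Qed.

End Accessibility.

Section CanonicalModel.
Variables (F : Type) (ar : F -> nat).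
Notation form := (form ar).
Notation prim := (gterm ar).

Fixpoint ob_atoms (a : form) : seq prim :=
  match a with
  | Prim _ | Xn _ => [::]
  | Neg a | Kn a => ob_atoms a
  | And a b => ob_atoms a ++ ob_atoms b
  | Ob p => [:: p]
  end.

Variables (G0 : set form) (P : seq prim).

Definition canonical_obs : seq prim := filter (fun q => `[< G0 (Ob q) >]) P.

Definition canonical_rules : deductive_system (sym_ext F) :=
  fun prem c => prem = [::] /\ exists2 a, G0 (Xn a) & c = trans a.

Lemma canonical_rules_wf prem c : canonical_rules prem c ->
  all (wfb (ar_ext ar)) prem && wfb (ar_ext ar) c.
Proof. by case=> -> [a _ ->]; rewrite trans_wf. Qed.

Definition canonical_model : kd_structure ar :=
  @KDStructure F ar (set form)
    (fun s => [/\ maximal s.1, accessible G0 s.1 & s.2 = canonical_obs])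
    (fun s p => `[< s.1 (Prim p) >])
    canonical_rules canonical_rules_wf.

Hypothesis G0_max : maximal G0.

Lemma canonical_obsP p : inlist p P -> inlist p canonical_obs <-> G0 (Ob p).
Proof. by move=> Pp; rewrite inlist_filter; split=> [[_ /asboolP]|/asboolP]. Qed.

Lemma canonical_deducible a :
  deducible (ar_ext ar) canonical_rules [seq trans (Ob p) | p <- canonical_obs]
    (trans a) <-> G0 (Xn a).
Proof.
split=> [/deducible_last_step [[_ [rho [/inlist_map [q obs_q ->]]]]|]|G0Xa].
- rewrite subst_ground ?trans_ground // => /trans_inj ->.
  case/inlist_filter: obs_q => _ /asboolP G0q.
  exact (maximal_mp G0_max (maximal_provable G0_max (AX_X2 q)) G0q).
- case=> _ [_ [rho [[_ [b G0Xb ->]]]]].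
  by rewrite subst_ground ?trans_ground // => /trans_inj ->.
- apply: (deducible_one_step (rho_true_ground ar)); right; exists (trans a).
    by split=> //; exists a.
  by rewrite subst_ground ?trans_ground.
Qed.

Lemma canonical_truth a : (forall p, inlist p (ob_atoms a) -> inlist p P) ->
  forall H, maximal H -> accessible G0 H ->
  sat F ar canonical_model (H, canonical_obs) a <-> H a.
Proof.
elim: a => [p|a IH|a IHa b IHb|a IH|a IH|p] /= a_obs H H_max G0H.
- by split=> /asboolP.
- by rewrite (maximal_neg H_max) IH.
- have a_obs' q : inlist q (ob_atoms a) -> inlist q P.
    by move=> aq; apply/a_obs/inlist_cat; left.
  have b_obs' q : inlist q (ob_atoms b) -> inlist q P.
    by move=> bq; apply/a_obs/inlist_cat; right.
  by rewrite (maximal_and H_max) IHa // IHb.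
- rewrite -(maximal_K_stable (AX_K4 a) G0_max H_max G0H).
  split=> [Ka|G0Ka [H' O'] [H'_max G0H' /= ->] _].
  + apply: contrapT => /(accessible_witness G0_max) [H' H'_max [G0H']].
    move=> /(maximal_neg H'_max); apply; apply/(IH a_obs H' H'_max G0H').
    by apply: Ka.
  + by apply/(IH a_obs H' H'_max G0H')/G0H'.
- rewrite -(maximal_K_stable (AX_X1 a) G0_max H_max G0H).
  exact: canonical_deducible.
- rewrite -(maximal_K_stable (AX_X3 p) G0_max H_max G0H).
  by apply: canonical_obsP; apply: a_obs; left.
Qed.

End CanonicalModel.

Lemma completeness (F : Type) (ar : F -> nat) (phi : form ar) :
  valid phi -> provable phi.
Proof.
move=> phi_valid; apply: contrapT => phi_unprovable.
have [|G0 G0_max G0_nphi] := @lindenbaum _ _ (set0 `|` [set Neg phi]).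
  by apply: contrapT => /inconsistent_add_neg /derivable0.
have G0_refl := maximal_accessible_refl G0_max.
move: (phi_valid (canonical_model G0 (ob_atoms phi))
  (G0, canonical_obs G0 (ob_atoms phi))).
rewrite canonical_truth // => /(_ (And3 G0_max G0_refl erefl)).
by apply/(maximal_neg G0_max); apply: G0_nphi; right.
Qed.

Theorem theorem4p1 (F : finType) (ar : F -> nat) (phi : form ar) :
  provable phi <-> valid phi.
Proof. by split; [apply: soundness|apply: completeness]. Qed.
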